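(* Let $(G,\varepsilon_G)$ be a graded Lie group with $\mathcal G(G)\neq\emptyset$, $Z\subseteq Z(G^\uparrow)$ a closed subgroup which is normal in $G$, $q\colon G\to\underline G=G/Z$ the quotient map and notation as in the context. Fix $W=(x,\sigma)\in\mathcal G(G)$, $\underline W=(x,q(\sigma))$ and $\mathcal W_+=G^\uparrow.W$. Then for each $\alpha\in Z^-$: (a) for every $W_1=(x_1,\sigma_1)\in\mathcal G(G)$, $q_{\mathcal G}(W_1^{'\alpha})=(-x_1,q(\sigma_1))$; (b) if $\alpha^2\neq e$, the map $W_1\mapsto W_1^{'\alpha}$ is not involutive; (c) the map $\mathcal G(G)\to\mathcal G(G)$, $(x_1,\sigma_1)\mapsto(-x_1,\alpha\sigma_1)$ is $G^\uparrow$-equivariant; (d) $W_1^{'\alpha}=\alpha*W_1'$ for $W_1\in\mathcal G(G)$; (e) $*_\alpha$ defines an action of $G$ on $\mathcal G(G)$ satisfying $W_1^{'\alpha}=\sigma_1*_\alpha W_1$ for $W_1=(x_1,\sigma_1)\in\mathcal G(G)$; if $W^{'\alpha}\in G^\uparrow.W$, then $\mathcal W_+$ is invariant under $G$ for the action $*_\alpha$; (f) there exists $\alpha\in Z^-$ with $W^{'\alpha}\in\mathcal W_+$ if and only if $(-x,q(\sigma))\in q(G^\uparrow).\underline W$; if this holds for $\alpha$, then for $\beta\in Z^-$ one has $W^{'\beta}\in\mathcal W_+$ if and only if $\beta^{-1}\alpha\in Z_2$, and in this case the twisted actions of $g\in G^\downarrow$ are related by $g*_\beta=(\beta\alpha^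{-1})*g*_\alpha$.
   Context: $G$ is a finite-dimensional Lie group with Lie algebra $\mathfrak g$ and continuous homomorphism $\varepsilon_G\colon G\to\{\pm1\}$, $G^\uparrow=\ker\varepsilon_G$, $G^\downarrow=G\setminus G^\uparrow$. For a graded Lie group $H$ (here $G$ or $\underline G$ with grading induced from $G$), $\mathcal G(H)=\{(x,\tau)\in\mathfrak g\times H^\downarrow:\tau^2=e,\operatorname{Ad}_{\mathfrak g}(\tau)x=x\}$ with action $h.(x,\tau)=(\varepsilon(h)\operatorname{Ad}_{\mathfrak g}(h)x,h\tau h^{-1})$ (for $\underline G$, $\operatorname{Ad}_{\mathfrak g}$ is the factorized adjoint action, which exists since $Z$ acts trivially on $\mathfrak g$). $q_{\mathcal G}\colon\mathcal G(G)\to\mathcal G(\underline G)$, $(x,\sigma)\mapsto(x,q(\sigma))$. For $W_1=(x_1,\sigma_1)\in\mathcal G(G)$, $W_1'=(-x_1,\sigma_1)$. $Z^-=\{\gamma\in Z:\sigma\gamma\sigma=\gamma^{-1}\}$ (independent of the choice of $\sigma\in G^\downarrow$). For $\alpha\in Z^-$: $\alpha*(x_1,\sigma_1)=(x_1,\alpha\sigma_1)$ (an action of $Z^-$ on $\mathcal G(G)$); the $\alpha$-twisted complement is $W_1^{'\alpha}=(-x_1,\alpha\sigma_1)$; the twisted action is $g*_\alpha W_1=g.W_1$ for $g\in G^\uparrow$ and $g*_\alpha W_1=g.(\alpha^{-1}*W_1)=\alpha*(g.W_1)$ for $g\in G^\downarrow$. Further $G^\uparrow_{\underline W}=\{g\in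 G^\uparrow:q(g).\underline W=\underline W\}$, $\partial\colon G^\uparrow_{\underline W}\to Z^-$, $\partial(g)=g\sigma g^{-1}\sigma$, and $Z_2=\partial(G^\uparrow_{\underline W})$. *)

From HB Require Import structures.
From mathcomp Require Import all_boot all_order all_algebra.
From mathcomp Require Import reals.
Set Implicit Arguments. Unset Strict Implicit. Unset Printing Implicit Defensive.
Import Order.TTheory GRing.Theory Num.Theory.
Local Open Scope ring_scope.

(* A graded group (G, eps_G) together with its adjoint action on the Lie
   algebra V.  geps g = true  <->  eps_G(g) = +1, i.e. g \in G^up. *)
Record graded_group (R : realType) (V : lmodType R) := GradedGroup {
  gcar :> Type;
  gmul : gcar -> gcar -> gcar;
  ginv : gcar -> gcar;
  gone : gcar;
  gmulA : forall a b c, gmul a (gmul b c) = gmul (gmul a b) c;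
  gmul1g : forall a, gmul gone a = a;
  gmulVg : forall a, gmul (ginv a) a = gone;
  geps : gcar -> bool;
  geps_mul : forall a b, geps (gmul a b) = (geps a == geps b);
  gAd : gcar -> V -> V;
  gAd_lin : forall g (c : R) u v, gAd g (c *: u + v) = c *: gAd g u + gAd g v;
  gAd_mul : forall a b v, gAd (gmul a b) v = gAd a (gAd b v);
  gAd1 : forall v, gAd gone v = v
}.

Section GradedDefs.
Variables (R : realType) (V : lmodType R) (G : graded_group V).

Definition up (g : G) : Prop := geps g = true.
Definition down (g : G) : Prop := geps g = false.
Definition sgn (g : G) : R := if geps g then 1 else -1.

Definition GS (W : V * G) : Prop :=
  down W.2 /\ gmul W.2 W.2 = gone G /\ gAd W.2 W.1 = W.1.

Definition act (h : G) (W : V * G) : V * G :=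
  (sgn h *: gAd h W.1, gmul (gmul h W.2) (ginv h)).

Definition compl (W : V * G) : V * G := (- W.1, W.2).
Definition zact (a : G) (W : V * G) : V * G := (W.1, gmul a W.2).
Definition tcompl (a : G) (W : V * G) : V * G := (- W.1, gmul a W.2).
Definition tact (a g : G) (W : V * G) : V * G :=
  if geps g then act g W else act g (zact (ginv a) W).

Definition orbit_up (W : V * G) (W1 : V * G) : Prop :=
  exists g, up g /\ W1 = act g W.

Definition Zminus (Z : G -> Prop) (sigma : G) (c : G) : Prop :=
  Z c /\ gmul (gmul sigma c) sigma = ginv c.

End GradedDefs.

Section QuotDefs.
Variables (R : realType) (V : lmodType R) (G Gb : graded_group V) (q : G -> Gb).

Definition qG (W : V * G) : V * Gb := (W.1, q W.2).

Definition qorbit_up (Wb : V * Gb) (Wb1 : V * Gb) : Prop :=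
  exists g : G, up g /\ Wb1 = act (q g) Wb.

Definition Gup_stab (W : V * G) (g : G) : Prop :=
  up g /\ act (q g) (qG W) = qG W.

Definition bd (sigma g : G) : G := gmul (gmul (gmul g sigma) (ginv g)) sigma.

Definition Z2 (W : V * G) (c : G) : Prop :=
  exists g, Gup_stab W g /\ c = bd W.2 g.

End QuotDefs.

(* Twisting by [alpha] multiplies the involution by a central element, and
   everything rests on one identity: each [c] in [Z^-] satisfies
   [h c = c^-1 h] for every [h] in [G^down] (write [h = (h sigma) sigma], where
   [h sigma] lies in [G^up] and so commutes with [c^-1]).  It yields the action
   law for [*_alpha] and the [*_alpha]-invariance of [W_+].  For (f), an
   equation [W'^alpha = g.W] with [g] in [G^up] says [g sigma g^-1 =
   partial(g) sigma]; hence such an [alpha] exists iff [(-x, q sigma)] lies in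
   the [q(G^up)]-orbit, and two admissible twists differ by an element of
   [Z_2 = partial(G^up_W)]. *)
From HB Require Import structures.
From mathcomp Require Import all_boot all_order all_algebra.
From mathcomp Require Import reals.
Set Implicit Arguments. Unset Strict Implicit. Unset Printing Implicit Defensive.
Import Order.TTheory GRing.Theory Num.Theory.
Local Open Scope ring_scope.

Section GradedGroupTheory.
Context {R : realType} {V : lmodType R} {G : graded_group V}.
Implicit Types (a b c g h s : G) (v : V) (W : V * G).

Lemma gmulKg a b : gmul (ginv a) (gmul a b) = b.
Proof. by rewrite gmulA gmulVg gmul1g. Qed.

Lemma gmul_idem_eq1 a : gmul a a = a -> a = gone G.
Proof. by move=> idem; rewrite -(gmulVg a) -{3}idem gmulKg. Qed.

Lemma gmulgV a : gmul a (ginv a) = gone G.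
Proof. by apply: gmul_idem_eq1; rewrite -gmulA gmulKg. Qed.

Lemma gmulg1 a : gmul a (gone G) = a.
Proof. by rewrite -(gmulVg a) gmulA gmulgV gmul1g. Qed.

Lemma gmulgK a b : gmul (gmul b a) (ginv a) = b.
Proof. by rewrite -gmulA gmulgV gmulg1. Qed.

Lemma gmulgKV a b : gmul (gmul b (ginv a)) a = b.
Proof. by rewrite -gmulA gmulVg gmulg1. Qed.

Lemma ginv_unique a b : gmul a b = gone G -> a = ginv b.
Proof. by move=> ab1; rewrite -(gmulgK b a) ab1 gmul1g. Qed.

Lemma ginvK a : ginv (ginv a) = a.
Proof. by apply/esym/ginv_unique/gmulgV. Qed.

Lemma ginvM a b : ginv (gmul a b) = gmul (ginv b) (ginv a).
Proof.
by apply/esym/ginv_unique; rewrite -gmulA (gmulA (ginv a)) gmulVg gmul1g gmulVg.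
Qed.

Lemma ginv1 : ginv (gone G) = gone G.
Proof. by apply/esym/ginv_unique; rewrite gmul1g. Qed.

Lemma ginv_involution s : gmul s s = gone G -> ginv s = s.
Proof. by move=> ss1; apply/esym/ginv_unique. Qed.

Lemma geps1 : geps (gone G) = true.
Proof. by have := geps_mul (gone G) (gone G); rewrite gmul1g eqxx. Qed.

Lemma gepsV a : geps (ginv a) = geps a.
Proof. by have := geps_mul (ginv a) a; rewrite gmulVg geps1 => /esym/eqP. Qed.

Lemma upM g h : up g -> up h -> up (gmul g h).
Proof. by rewrite /up geps_mul => -> ->. Qed.

Lemma upV g : up g -> up (ginv g).
Proof. by rewrite /up gepsV. Qed.

Lemma up_mul_down g h : down g -> down h -> up (gmul g h).
Proof. by rewrite /up /down geps_mul => -> ->. Qed.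

Lemma sgnM a b : sgn (gmul a b) = sgn a * sgn b.
Proof.
rewrite /sgn geps_mul.
by case: (geps a); case: (geps b); rewrite /= ?mulr1 ?mulrN1 ?opprK.
Qed.

Lemma sgn_up g : up g -> sgn g = 1.
Proof. by rewrite /up /sgn => ->. Qed.

Lemma sgn_down g : down g -> sgn g = -1.
Proof. by rewrite /down /sgn => ->. Qed.

Lemma gAd0 g : gAd g 0 = 0.
Proof.
have := gAd_lin g 1 0 0; rewrite !scale1r addr0 => Ad00.
by apply: (addrI (gAd g 0)); rewrite addr0 -Ad00.
Qed.

Lemma gAdZ g (k : R) v : gAd g (k *: v) = k *: gAd g v.
Proof. by have := gAd_lin g k v 0; rewrite !addr0 gAd0 addr0. Qed.

Lemma gAdN g v : gAd g (- v) = - gAd g v.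
Proof. by rewrite -scaleN1r gAdZ scaleN1r. Qed.

Lemma gAdK g v : gAd (ginv g) (gAd g v) = v.
Proof. by rewrite -gAd_mul gmulVg gAd1. Qed.

Lemma actM g h W : act (gmul g h) W = act g (act h W).
Proof.
rewrite /act /=; congr pair; first by rewrite sgnM gAd_mul gAdZ scalerA mulrC.
by rewrite ginvM -!gmulA.
Qed.

Lemma act1 W : act (gone G) W = W.
Proof.
by case: W => v s; rewrite /act /= gAd1 /sgn geps1 scale1r gmul1g ginv1 gmulg1.
Qed.

Lemma act_compl g W : act g (compl W) = compl (act g W).
Proof. by rewrite /act /compl /= gAdN scalerN. Qed.

Lemma act_zact h c c' W :
  gmul h c = gmul c' h -> act h (zact c W) = zact c' (act h W).
Proof. by move=> hc; rewrite /act /zact /= !gmulA hc. Qed.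

Lemma zactM c d W : zact c (zact d W) = zact (gmul c d) W.
Proof. by rewrite /zact /= gmulA. Qed.

Lemma zact1 W : zact (gone G) W = W.
Proof. by case: W => v s; rewrite /zact gmul1g. Qed.

Lemma GS_act g W : GS W -> GS (act g W).
Proof.
case: W => v s [/= s_down [ss1 Ad_s]]; split; [|split] => /=.
- by rewrite /down !geps_mul gepsV s_down; case: (geps g).
- by rewrite -!gmulA gmulKg (gmulA s) ss1 gmul1g gmulgV.
- by rewrite !gAd_mul !gAdZ gAdK Ad_s.
Qed.

Lemma GS_compl W : GS W -> GS (compl W).
Proof.
by case: W => v s [/= s_down [ss1 Ad_s]]; split; [|split] => //=; rewrite gAdN Ad_s.
Qed.

Lemma act_self_compl W : GS W -> act W.2 W = compl W.
Proof.
case: W => v s [/= s_down [ss1 Ad_s]].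
by rewrite /act /compl /= sgn_down // Ad_s scaleN1r gmulgK.
Qed.

Lemma orbit_up_act W W1 g : up g -> orbit_up W W1 -> orbit_up W (act g W1).
Proof.
by move=> g_up [u [u_up ->]]; exists (gmul g u); rewrite actM; split=> //; apply: upM.
Qed.

Lemma orbit_up_act_iff W W1 g : up g -> orbit_up W (act g W1) <-> orbit_up W W1.
Proof.
move=> g_up; split=> [|orbW1]; last exact: orbit_up_act.
by move/(orbit_up_act (upV g_up)); rewrite -actM gmulVg act1.
Qed.

Lemma bd_mulr s g : gmul s s = gone G -> gmul (bd s g) s = gmul (gmul g s) (ginv g).
Proof. by move=> ss1; rewrite /bd -gmulA ss1 gmulg1. Qed.

End GradedGroupTheory.

Section CentralSubgroup.
Context {R : realType} {V : lmodType R} {G : graded_group V} {Z : G -> Prop} {sigma : G}.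
Implicit Types (a b c d g h : G) (W : V * G).

Hypothesis HZmul : forall a b, Z a -> Z b -> Z (gmul a b).
Hypothesis HZinv : forall a, Z a -> Z (ginv a).
Hypothesis HZcent : forall z, Z z -> up z /\ forall g, up g -> gmul z g = gmul g z.
Hypothesis HZAd : forall z v, Z z -> gAd z v = v.

Lemma Z_up c : Z c -> up c.
Proof. by case/HZcent. Qed.

Lemma Z_commute c g : Z c -> up g -> gmul c g = gmul g c.
Proof. by case/HZcent=> _; apply. Qed.

Lemma act_zact_up h c W : up h -> Z c -> act h (zact c W) = zact c (act h W).
Proof. by move=> h_up Zc; apply/act_zact/esym/Z_commute. Qed.

Lemma orbit_up_zactV W c :
  Z c -> orbit_up W (zact (ginv c) W) <-> orbit_up W (zact c W).
Proof.
suff zactV d : Z d -> orbit_up W (zact d W) -> orbit_up W (zact (ginv d) W).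
  by move=> Zc; split=> [/(zactV _ (HZinv Zc))|]; rewrite ?ginvK //; apply: zactV.
move=> Zd [g [g_up gW]]; exists (ginv g); split; first exact: upV.
have -> : act (ginv g) W = act (ginv g) (zact (ginv d) (zact d W)).
  by rewrite zactM gmulVg zact1.
by rewrite gW (act_zact_up _ (upV g_up) (HZinv Zd)) -actM gmulVg act1.
Qed.

Lemma orbit_up_zact W W1 d :
  Z d -> orbit_up W W1 -> orbit_up W (zact d W1) <-> orbit_up W (zact d W).
Proof. by move=> Zd [u [u_up ->]]; rewrite -act_zact_up //; apply: orbit_up_act_iff. Qed.

Lemma sqr_eq1_of_tcomplK a W : tcompl a (tcompl a W) = W -> gmul a a = gone G.
Proof.
case: W => v s; rewrite /tcompl /= opprK => -[aas].
by rewrite -(gmulgK s (gmul a a)) -(gmulA a a s) aas gmulgV.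
Qed.

Lemma tcompl_act a g W : Z a -> up g -> tcompl a (act g W) = act g (tcompl a W).
Proof.
move=> Za g_up; have -> : tcompl a W = zact a (compl W) by [].
by rewrite act_zact_up // act_compl.
Qed.

Hypothesis sigma_down : down sigma.
Hypothesis sigma2 : gmul sigma sigma = gone G.

Lemma zminusV c : Zminus Z sigma c -> Zminus Z sigma (ginv c).
Proof.
case=> Zc sc_s; split; first exact: HZinv.
rewrite ginvK -gmulA.
by have := congr1 (@ginv _ _ G) sc_s; rewrite ginvK !ginvM (ginv_involution sigma2).
Qed.

Lemma zminus_commute_sigma c : Zminus Z sigma c -> gmul sigma c = gmul (ginv c) sigma.
Proof. by case=> _ <-; rewrite -gmulA sigma2 gmulg1. Qed.

Lemma zminus_commute_down h c :
  down h -> Zminus Z sigma c -> gmul h c = gmul (ginv c) h.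
Proof.
move=> h_down c_minus; have hs_up := up_mul_down h_down sigma_down.
have hss : gmul (gmul h sigma) sigma = h by rewrite -gmulA sigma2 gmulg1.
have Zc' : Z (ginv c) by apply: HZinv; case: c_minus.
rewrite -[h in LHS]hss -gmulA zminus_commute_sigma // gmulA.
by rewrite -(Z_commute Zc' hs_up) -gmulA hss.
Qed.

Lemma zminus_bd g : Z (bd sigma g) -> Zminus Z sigma (bd sigma g).
Proof.
move=> Zbd; split=> //.
by rewrite /bd !ginvM ginvK (ginv_involution sigma2) -!gmulA sigma2 gmulg1.
Qed.

Lemma GS_zact c W : Zminus Z sigma c -> GS W -> GS (zact c W).
Proof.
move=> c_minus; have Zc := c_minus.1.
case: W => v s [/= s_down [ss1 Ad_s]]; split; [|split] => /=.
- by rewrite /down geps_mul Z_up // s_down.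
- rewrite -gmulA (gmulA s) (zminus_commute_down s_down c_minus).
  by rewrite -gmulA ss1 gmulg1 gmulgV.
- by rewrite gAd_mul HZAd.
Qed.

Lemma GS_tcompl a W : Zminus Z sigma a -> GS W -> GS (tcompl a W).
Proof. by move=> a_minus /GS_compl; apply: GS_zact. Qed.

Lemma tact_up a g W : up g -> tact a g W = act g W.
Proof. by rewrite /tact => ->. Qed.

Lemma tact_down a g W : Zminus Z sigma a -> down g -> tact a g W = zact a (act g W).
Proof.
move=> a_minus g_down; rewrite /tact (g_down : geps g = false); apply: act_zact.
by rewrite (zminus_commute_down g_down (zminusV a_minus)) ginvK.
Qed.

Lemma tactM a g h W :
  Zminus Z sigma a -> tact a (gmul g h) W = tact a g (tact a h W).
Proof.
move=> a_minus; have Za := a_minus.1.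
case Eg: (geps g); case Eh: (geps h).
- by rewrite (tact_up _ _ (upM Eg Eh)) !tact_up // actM.
- have gh_down : down (gmul g h) by rewrite /down geps_mul Eg Eh.
  by rewrite (tact_up _ _ Eg) !tact_down // actM act_zact_up.
- have gh_down : down (gmul g h) by rewrite /down geps_mul Eg Eh.
  by rewrite tact_down // (tact_up _ _ Eh) tact_down // actM.
- rewrite (tact_up _ _ (up_mul_down Eg Eh)) !tact_down // actM.
  rewrite (act_zact _ (zminus_commute_down Eg a_minus)).
  by rewrite zactM gmulgV zact1.
Qed.

Lemma GS_tact a g W : Zminus Z sigma a -> GS W -> GS (tact a g W).
Proof.
move=> a_minus GSW; case Eg: (geps g); first by rewrite tact_up //; apply: GS_act.
by rewrite tact_down //; apply/GS_zact/GS_act.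
Qed.

Lemma tcompl_tact a W : Zminus Z sigma a -> GS W -> tcompl a W = tact a W.2 W.
Proof.
move=> a_minus GSW; have [s_down _] := GSW.
by rewrite tact_down // act_self_compl.
Qed.

Lemma orbit_up_tact a g W W1 : Zminus Z sigma a -> GS W ->
  orbit_up W (tcompl a W) -> orbit_up W W1 -> orbit_up W (tact a g W1).
Proof.
move=> a_minus GSW [w [w_up wW]] [u [u_up ->]]; have [s_down [ss1 _]] := GSW.
case Eg: (geps g); first by rewrite tact_up //; apply: orbit_up_act => //; exists u.
(* [g u] lies in [G^down]: split it as [(g u s) s], where [s.W = W']. *)
have v_up : up (gmul (gmul g u) W.2).
  by rewrite /up !geps_mul Eg u_up s_down.
rewrite tact_down //.
have -> : act g (act u W) = act (gmul (gmul g u) W.2) (compl W).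
  by rewrite -(act_self_compl GSW) -[RHS]actM -gmulA ss1 gmulg1 actM.
rewrite -act_zact_up //; last by case: a_minus.
have -> : zact a (compl W) = tcompl a W by [].
by rewrite wW; apply: orbit_up_act => //; exists w.
Qed.

Section Quotient.
Context {Gb : graded_group V} {q : G -> Gb}.

Hypothesis Hqmul : forall a b, q (gmul a b) = gmul (q a) (q b).
Hypothesis Hqker : forall g, q g = gone Gb <-> Z g.
Hypothesis Hqeps : forall g, geps (q g) = geps g.
Hypothesis HqAd : forall g v, gAd (q g) v = gAd g v.

Lemma q1 : q (gone G) = gone Gb.
Proof. by apply: gmul_idem_eq1; rewrite -Hqmul gmul1g. Qed.

Lemma qV g : q (ginv g) = ginv (q g).
Proof. by apply: ginv_unique; rewrite -Hqmul gmulVg q1. Qed.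

Lemma qG_act g W : qG q (act g W) = act (q g) (qG q W).
Proof. by rewrite /qG /act /sgn /= Hqeps HqAd !Hqmul qV. Qed.

Lemma qG_zact c W : Z c -> qG q (zact c W) = qG q W.
Proof. by move=> Zc; rewrite /qG /zact /= Hqmul (proj2 (Hqker c) Zc) gmul1g. Qed.

Lemma qG_tcompl a W : Z a -> qG q (tcompl a W) = (- W.1, q W.2).
Proof. by move=> Za; apply: (qG_zact (compl W) Za). Qed.

Lemma Z_bd g : q (gmul (gmul g sigma) (ginv g)) = q sigma -> Z (bd sigma g).
Proof. by move=> qgs; apply/Hqker; rewrite /bd Hqmul qgs -Hqmul sigma2 q1. Qed.

Lemma zminus_tcompl_orbit_iff x : GS (x, sigma) ->
  (exists a, Zminus Z sigma a /\ orbit_up (x, sigma) (tcompl a (x, sigma))) <->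
  qorbit_up q (qG q (x, sigma)) (- x, q sigma).
Proof.
move=> GSW; split.
  move=> [a [[Za _] [u [u_up Eu]]]]; exists u; split=> //.
  by rewrite -qG_act -Eu qG_tcompl.
move=> [g [g_up]]; rewrite -qG_act /qG /act /= sgn_up // scale1r => -[gx gs].
exists (bd sigma g); split; first by apply/zminus_bd/Z_bd.
by exists g; split=> //; rewrite /tcompl /act /= sgn_up // scale1r gx bd_mulr.
Qed.

Lemma Z2_orbit_up_zact W c : GS W -> Z c -> Z2 q W c <-> orbit_up W (zact c W).
Proof.
case: W => v s [/= _ [ss1 _]] Zc; split.
  move=> [g [[g_up]]]; rewrite -qG_act /qG /act /= => -[gv _] ->.
  by exists g; split=> //; rewrite /zact /act /= gv bd_mulr.
move=> [g [g_up gW]]; exists g; split; first by split=> //; rewrite -qG_act -gW qG_zact.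
have := congr1 snd gW; rewrite /= => cs.
by rewrite /bd -cs -gmulA ss1 gmulg1.
Qed.

Lemma orbit_up_tcompl_Z2 W a b : GS W -> Z a -> Z b -> orbit_up W (tcompl a W) ->
  orbit_up W (tcompl b W) <-> Z2 q W (gmul (ginv b) a).
Proof.
move=> GSW Za Zb orb_a; have Zba := HZmul Zb (HZinv Za).
have -> : tcompl b W = zact (gmul b (ginv a)) (tcompl a W).
  by rewrite /tcompl /zact /= gmulA gmulgKV.
have -> : gmul (ginv b) a = ginv (gmul b (ginv a)).
  by rewrite ginvM ginvK (Z_commute Za (Z_up (HZinv Zb))).
rewrite orbit_up_zact // (Z2_orbit_up_zact GSW (HZinv Zba)).
by apply: iff_sym; apply: orbit_up_zactV.
Qed.

End Quotient.

End CentralSubgroup.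

Unset Implicit Arguments.

Theorem lemma2p18 (R : realType) (V : lmodType R) (G Gb : graded_group V)
  (Z : G -> Prop) (q : G -> Gb)
  (* G(G) is nonempty *)
  (HGne : exists W1 : V * G, GS W1)
  (* Z is a subgroup *)
  (HZ1 : Z (gone G))
  (HZmul : forall a b, Z a -> Z b -> Z (gmul a b))
  (HZinv : forall a, Z a -> Z (ginv a))
  (* Z is contained in the centre of G^up *)
  (HZcent : forall z, Z z -> up z /\ forall g, up g -> gmul z g = gmul g z)
  (* Z is normal in G *)
  (HZnorm : forall z g, Z z -> Z (gmul (gmul g z) (ginv g)))
  (* Z acts trivially on the Lie algebra *)
  (HZAd : forall z v, Z z -> gAd z v = v)
  (* q : G -> Gb = G/Z is the quotient map *)
  (Hqmul : forall a b, q (gmul a b) = gmul (q a) (q b))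
  (Hqsurj : forall y : Gb, exists g, q g = y)
  (Hqker : forall g, q g = gone Gb <-> Z g)
  (* grading of Gb induced from G, factorized adjoint action *)
  (Hqeps : forall g, geps (q g) = geps g)
  (HqAd : forall g v, gAd (q g) v = gAd g v)
  (x : V) (sigma : G) (HW : GS (x, sigma))
  (alpha : G) (Halpha : Zminus Z sigma alpha) :
  (* (a) *)
  (forall W1 : V * G, GS W1 -> qG q (tcompl alpha W1) = (- W1.1, q W1.2)) /\
  (* (b) *)
  (gmul alpha alpha <> gone G ->
     ~ (forall W1 : V * G, GS W1 -> tcompl alpha (tcompl alpha W1) = W1)) /\
  (* (c) *)
  ((forall W1 : V * G, GS W1 -> GS (tcompl alpha W1)) /\
   (forall (g : G) (W1 : V * G), up g -> GS W1 ->
      tcompl alpha (act g W1) = act g (tcompl alpha W1))) /\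
  (* (d) *)
  (forall W1 : V * G, GS W1 -> tcompl alpha W1 = zact alpha (compl W1)) /\
  (* (e) *)
  ((forall (g : G) (W1 : V * G), GS W1 -> GS (tact alpha g W1)) /\
   (forall W1 : V * G, GS W1 -> tact alpha (gone G) W1 = W1) /\
   (forall (g h : G) (W1 : V * G), GS W1 ->
      tact alpha (gmul g h) W1 = tact alpha g (tact alpha h W1)) /\
   (forall W1 : V * G, GS W1 -> tcompl alpha W1 = tact alpha W1.2 W1) /\
   (orbit_up (x, sigma) (tcompl alpha (x, sigma)) ->
      forall (g : G) (W1 : V * G), orbit_up (x, sigma) W1 ->
        orbit_up (x, sigma) (tact alpha g W1))) /\
  (* (f) *)
  (((exists a, Zminus Z sigma a /\ orbit_up (x, sigma) (tcompl a (x, sigma)))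
      <-> qorbit_up q (qG q (x, sigma)) (- x, q sigma)) /\
   (orbit_up (x, sigma) (tcompl alpha (x, sigma)) ->
      forall beta, Zminus Z sigma beta ->
        ((orbit_up (x, sigma) (tcompl beta (x, sigma))
            <-> Z2 q (x, sigma) (gmul (ginv beta) alpha)) /\
         (orbit_up (x, sigma) (tcompl beta (x, sigma)) ->
            forall (g : G) (W1 : V * G), down g -> GS W1 ->
              tact beta g W1 = zact (gmul beta (ginv alpha)) (tact alpha g W1))))).
Proof.
have [sigma_down [sigma2 _]] := HW; have [Zalpha _] := Halpha.
split; first by move=> W1 _; apply: (qG_tcompl (Z := Z)).
split.
  move=> alpha2 tcomplK; have [W1 /tcomplK W1K] := HGne.
  exact: alpha2 (sqr_eq1_of_tcomplK W1K).
split.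
  split=> [W1|g W1 g_up _]; last exact: (tcompl_act (Z := Z)).
  exact: (GS_tcompl (Z := Z) (sigma := sigma)).
split; first by case.
split.
  split; first by move=> g W1; apply: (GS_tact (Z := Z) (sigma := sigma)).
  split; first by move=> W1 _; rewrite /tact geps1 act1.
  split; first by move=> g h W1 _; apply: (tactM (Z := Z) (sigma := sigma)).
  split; first by move=> W1; apply: (tcompl_tact (Z := Z) (sigma := sigma)).
  by move=> orb_alpha g W1; apply: (orbit_up_tact (Z := Z) (sigma := sigma)).
split; first exact: zminus_tcompl_orbit_iff.
move=> orb_alpha beta beta_minus; have [Zbeta _] := beta_minus.
split; first exact: (orbit_up_tcompl_Z2 (Z := Z)).
move=> _ g W1 g_down _.
by rewrite !(tact_down (Z := Z) (sigma := sigma)) // zactM gmulgKV.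
Qed.
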